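(* Let $a,b$ be positive integers and $c$ an integer with $-b<c<a$, such that $\gcd(a,b,c)=1$ and each of $\gcd(a,b)$, $\gcd(a,c)$, $\gcd(b,c)$ differs from $1$. Let $d=\gcd(a,b)$ and $k\in\mathbb{N}\cup\{\infty\}$ with $k\ge d-1$. If $(a,b)$ is of case $(1')$, $(2')$ or $(3')$, then the $\mathbb{Z}$-grading $E_{(-b,c,a)}^{(\infty,k,\infty)}$ is $d$-central.
   Context: $E$ is the Grassmann algebra (over a field of characteristic zero) of an infinite-dimensional vector space with basis $e_1,e_2,\dots$; its basis consists of $1$ and the monomials $e_{i_1}\cdots e_{i_k}$, $i_1<\dots<i_k$, of length $k$ and support $\{e_{i_1},\dots,e_{i_k}\}$. For pairwise distinct integers $r_j$ and $v_j\in\mathbb{N}\cup\{\infty\}$, $E_{(r_1,\dots,r_n)}^{(v_1,\dots,v_n)}=\bigoplus_rA_r$ is the $\mathbb{Z}$-grading obtained by splitting $\{e_i\}$ into $n$ disjoint sets of cardinalities $v_1,\dots,v_n$, giving elements of the $j$-th set degree $r_j$, monomials the sum of degrees. It is $d$-central if each $e_i$ is homogeneous, $A_r\neq0$ for all $r\in\mathbb{Z}$, and for each $h\in d\mathbb{Z}$, $A_h$ contains infinitely many monomials of even length with pairwise disjoint supports. Cases: for positive $a,b$ with $d=\gcd(a,b)$ there exist $\alpha,\beta,\alpha',\beta'\in\mathbb{N}_0$ with $d=\alpha a-\beta b$ and $-d=\alpha'a-\beta'b$; choose $(\alpha,\beta)$ with $\alpha+\beta$ least possible and $(\alpha',\beta')$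 with $\alpha'+\beta'$ least possible. Case $(1')$: $\alpha+\beta$ and $\alpha'+\beta'$ both even; $(2')$: $\alpha+\beta$ even, $\alpha'+\beta'$ odd; $(3')$: $\alpha+\beta$ odd, $\alpha'+\beta'$ even; $(4')$: both odd. *)

From mathcomp Require Import all_boot all_order all_algebra.
Set Implicit Arguments. Unset Strict Implicit. Unset Printing Implicit Defensive.
Import Order.TTheory GRing.Theory Num.Theory.
Local Open Scope ring_scope.

(* Extended naturals N ∪ {∞}: [None] is ∞. *)
Definition natinf := option nat.

Definition has_card (P : pred nat) (k : natinf) : Prop :=
  match k with
  | Some n => exists s : seq nat, [/\ uniq s, size s = n & forall x, P x = (x \in s)]
  | None => forall N : nat, exists x : nat, (N <= x)%N /\ P x
  end.

Definition natinf_ge (k : natinf) (m : nat) : Prop :=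
  match k with Some n => (m <= n)%N | None => True end.

(* Generators e_1, e_2, ... are indexed by nat (0-based).
   A monomial e_{i1}...e_{ik}, i1<...<ik, is represented by its strictly
   increasing list of indices (its support); its length is [size s]. *)
Definition monomial (s : seq nat) : bool := sorted ltn s.

Definition mdeg (deg : nat -> int) (s : seq nat) : int := \sum_(i <- s) deg i.

Definition disjoint_supp (s t : seq nat) : bool := all (fun x => x \notin t) s.

(* d-centrality of the Z-grading of E in which each generator e_i is
   homogeneous of degree [deg i] (homogeneity of the e_i thus holds by
   construction).  A_r is spanned by the monomials of degree r, so
   A_r <> 0 iff some monomial has degree r. *)
Definition d_central (d : nat) (deg : nat -> int) : Prop :=
  (forall r : int, exists s, monomial s /\ mdeg deg s = r) /\
  (forall h : int, (d%:Z %| h)%Z ->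
     exists f : nat -> seq nat,
       (forall n, [/\ monomial (f n), ~~ odd (size (f n)) & mdeg deg (f n) = h]) /\
       (forall m n, m <> n -> f m <> f n /\ disjoint_supp (f m) (f n))).

(* [deg] realizes the grading E_{(r_1,...,r_n)}^{(v_1,...,v_n)}: the generators
   are split into the disjoint sets deg^{-1}(r_j) of cardinality v_j,
   covering all generators. *)
Definition realizes_grading (deg : nat -> int) (rs : seq int) (vs : seq natinf) : Prop :=
  uniq rs /\ size rs = size vs /\
  (forall i, deg i \in rs) /\
  (forall j, (j < size rs)%N -> has_card (fun i => deg i == nth 0 rs j) (nth None vs j)).

Definition minsum_parity (a b : nat) (t : int) (p : bool) : Prop :=
  exists alpha beta : nat,
    [/\ (alpha%:Z * a%:Z - beta%:Z * b%:Z = t),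
        (forall al' be' : nat, al'%:Z * a%:Z - be'%:Z * b%:Z = t ->
            (alpha + beta <= al' + be')%N)
      & odd (alpha + beta) = p].

(* (a,b) is of case (p,q): parity of minimal alpha+beta for d is p and
   for -d is q (false = even, true = odd), d = gcd(a,b). *)
Definition case_ab (a b : nat) (p q : bool) : Prop :=
  minsum_parity a b (gcdn a b)%:Z p /\ minsum_parity a b (- (gcdn a b)%:Z) q.

Definition case1' a b := case_ab a b false false.
Definition case2' a b := case_ab a b false true.
Definition case3' a b := case_ab a b true false.

(* Let d = gcd(a,b), a = a'd and b = b'd.  If a' and b' were both odd, every
   solution of αa - βb = ±d would have α + β odd, which is case (4'); as a' and
   b' are coprime, a' + b' is odd in cases (1')-(3').  Shifting a solution
   (z, x) of za - xb = md by (b', a') then flips the parity of z + x, so every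
   multiple of d is the degree of a product of an even number of generators of
   degrees a and -b; since there are infinitely many of these, such products can
   be chosen with pairwise disjoint supports.  As gcd(c, d) = 1, every r is
   yc + md with 0 <= y <= d - 1 <= k, hence A_r <> 0. *)

From mathcomp Require Import all_boot all_order all_algebra zify ring.
Import Order.TTheory GRing.Theory Num.Theory.
Set Implicit Arguments. Unset Strict Implicit. Unset Printing Implicit Defensive.
Local Open Scope ring_scope.

Definition unbounded (P : pred nat) := forall N, exists i, (N < i)%N && P i.

Lemma has_card_unbounded P : has_card P None -> unbounded P.
Proof. by move=> hP N; have [i [Ni Pi]] := hP N.+1; exists i; rewrite Ni Pi. Qed.

Lemma monomial_rcons s i : monomial s -> (last 0%N s < i)%N -> monomial (rcons s i).
Proof. by case: s => [|x s] //=; rewrite rcons_path => ->. Qed.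

Lemma monomial_extend P n s : unbounded P -> monomial s ->
  exists t, [/\ monomial (s ++ t), size t = n & all P t].
Proof.
move=> hP; elim: n s => [|n IH] s ms; first by exists [::]; rewrite cats0.
have [i /andP[si Pi]] := hP (last 0%N s).
have [t [mt st Pt]] := IH _ (monomial_rcons ms si).
by exists (i :: t); rewrite -cat_rcons /= st Pi.
Qed.

Lemma has_card_monomial P k n : has_card P k -> natinf_ge k n ->
  exists t, [/\ monomial t, size t = n & all P t].
Proof.
case: k => [m|] /=.
- move=> [s [us sm Ps]] nm; exists (sort leq (take n s)); split.
  + rewrite /monomial ltn_sorted_uniq_leq sort_uniq take_uniq //.
    by rewrite sort_sorted //; apply: leq_total.
  + by rewrite size_sort size_takel // sm.
  + by rewrite all_sort; apply/allP => i /mem_take; rewrite Ps.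
- by move=> /has_card_unbounded hP _; exact: (monomial_extend n hP (s := [::])).
Qed.

Lemma mdeg_cat deg s t : mdeg deg (s ++ t) = mdeg deg s + mdeg deg t.
Proof. by rewrite /mdeg big_cat. Qed.

Lemma mdeg_const deg r s :
  all (fun i => deg i == r) s -> mdeg deg s = (size s)%:Z * r.
Proof.
rewrite /mdeg; elim: s => [|i s IH] /=; first by rewrite big_nil mul0r.
by case/andP => /eqP ri /IH rs; rewrite big_cons rs ri intS mulrDl mul1r.
Qed.

Lemma disjoint_monomial_family (Q : pred (seq nat)) :
  (forall N, exists s, [&& monomial (N :: s), s != [::] & Q s]) ->
  exists f : nat -> seq nat, (forall n, monomial (f n) && Q (f n)) /\
    (forall m n, m <> n -> f m <> f n /\ disjoint_supp (f m) (f n)).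
Proof.
move=> hQ; pose G N := xchoose (hQ N).
have GP N : [&& monomial (N :: G N), G N != [::] & Q (G N)] := xchooseP (hQ N).
(* block n lies above bnd n, which bounds all earlier blocks *)
pose fix bnd n := if n is n'.+1 then \max_(i <- bnd n' :: G (bnd n')) i else 0%N.
have G_gt n y : y \in G (bnd n) -> (bnd n < y)%N.
  by have /and3P[/(order_path_min ltn_trans)/allP + _ _] := GP (bnd n); apply.
have G_le n y : y \in G (bnd n) -> (y <= bnd n.+1)%N.
  by move=> Gy; apply: leq_bigmax_seq; rewrite // inE Gy orbT.
have bnd_mono : {homo bnd : m n / (m <= n)%N}.
  apply: homo_leq => [//|m n p|n]; first exact: leq_trans.
  exact: leq_bigmax_seq (mem_head _ _) _.
have G_lt m n y y' : (m < n)%N -> y \in G (bnd m) -> y' \in G (bnd n) -> (y < y')%N.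
  move=> mn Gy Gy'; apply: leq_ltn_trans (G_gt _ _ Gy').
  exact: leq_trans (G_le _ _ Gy) (bnd_mono _ _ mn).
have G_disj m n y : m <> n -> y \in G (bnd m) -> y \notin G (bnd n).
  move=> /eqP; case: ltngtP => // mn _ Gm; apply/negP => Gn.
  - by have := G_lt _ _ _ _ mn Gm Gn; rewrite ltnn.
  - by have := G_lt _ _ _ _ mn Gn Gm; rewrite ltnn.
exists (fun n => G (bnd n)); split.
  by move=> n; have /and3P[/path_sorted + _ ->] := GP (bnd n); rewrite andbT.
move=> m n mn; split; last by apply/allP => y; apply: G_disj.
have /and3P[_ + _] := GP (bnd m).
case Gm: (G (bnd m)) => [//|y s] _ Gmn.
by move: (G_disj _ _ y mn); rewrite Gm -Gmn mem_head => /(_ isT).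
Qed.

Section GeneratorsOfDegreesAB.
Variables (deg : nat -> int) (a b : nat).
Hypothesis degA : unbounded (fun i => deg i == a%:Z).
Hypothesis degB : unbounded (fun i => deg i == - b%:Z).

Lemma monomial_extend_ab x z s : monomial s ->
  exists t, [/\ monomial (s ++ t), size t = (x + z)%N
              & mdeg deg t = z%:Z * a%:Z - x%:Z * b%:Z].
Proof.
move=> ms; have [u [mu su Bu]] := monomial_extend x degB ms.
have [v [mv sv Av]] := monomial_extend z degA mu.
exists (u ++ v); rewrite catA size_cat su sv mdeg_cat.
by rewrite (mdeg_const Bu) (mdeg_const Av) su sv; split=> //; ring.
Qed.

Lemma disjoint_monomials_ab x z : (0 < z)%N ->
  exists f : nat -> seq nat,
    (forall n, [/\ monomial (f n), size (f n) = (x + z)%N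
                 & mdeg deg (f n) = z%:Z * a%:Z - x%:Z * b%:Z]) /\
    (forall m n, m <> n -> f m <> f n /\ disjoint_supp (f m) (f n)).
Proof.
move=> z_gt0.
pose Q s := (size s == x + z)%N && (mdeg deg s == z%:Z * a%:Z - x%:Z * b%:Z).
have blocks N : exists s, [&& monomial (N :: s), s != [::] & Q s].
  have [s [ms ss ds]] := monomial_extend_ab x z (isT : monomial [:: N]).
  by exists s; rewrite ms /Q ss ds !eqxx -size_eq0 ss -lt0n addn_gt0 z_gt0 orbT.
have [f [fQ f_disj]] := disjoint_monomial_family blocks.
exists f; split=> // n.
by have /and3P[-> /eqP -> /eqP ->] := fQ n.
Qed.

End GeneratorsOfDegreesAB.

Lemma odd_add_of_odd_coefs (a b z x t : nat) : odd a -> odd b ->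
  (z * a = x * b + t)%N -> odd (z + x) = odd t.
Proof.
move=> oa ob /(congr1 odd); rewrite !oddD !oddM oa ob !andbT => ->.
by case: (odd x); case: (odd t).
Qed.

Lemma coprime_residue_decomp (c : int) (d : nat) (r : int) :
  (0 < d)%N -> coprime `|c| d ->
  exists (y : nat) (m : int), (y < d)%N /\ r = y%:Z * c + m * d%:Z.
Proof.
move=> d_gt0 cd; have [u [v uv]] := Bezoutz c d%:Z.
rewrite /gcdz absz_nat (eqP cd) in uv.
have d_neq0 : d%:Z != 0 by rewrite eqz_nat -lt0n.
pose y := ((r * u) %% d)%Z.
have y_ge0 : 0 <= y by rewrite modz_ge0.
exists `|y|%N, (r * v + c * ((r * u) %/ d)%Z); split.
  by rewrite -ltz_nat gez0_abs // ltz_pmod.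
have r_eq : r = r * u * c + r * v * d%:Z by rewrite -!mulrA -mulrDr uv mulr1.
rewrite gez0_abs // /y {1}r_eq {1}(divz_eq (r * u) d%:Z); ring.
Qed.

Section ReducedCoefficients.
Variables a b : nat.
Local Notation d := (gcdn a b).
Local Notation a' := (a %/ gcdn a b)%N.
Local Notation b' := (b %/ gcdn a b)%N.

Lemma lincomb_shift z x j :
  (z + j * b')%:Z * a%:Z - (x + j * a')%:Z * b%:Z = z%:Z * a%:Z - x%:Z * b%:Z.
Proof.
have e : (a%:Z * b'%:Z = b%:Z * a'%:Z) by rewrite -!PoszM muln_divCA_gcd.
rewrite !PoszD !PoszM !mulrDl opprD addrACA -mulrA [b'%:Z * _]mulrC e.
by rewrite [b%:Z * _]mulrC mulrA subrr addr0.
Qed.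

Lemma lincomb_multiple p q : case_ab a b p q ->
  forall m : int, exists z x : nat, z%:Z * a%:Z - x%:Z * b%:Z = m * d%:Z.
Proof.
case=> [[al [be [e1 _ _]]] [al' [be' [e2 _ _]]]] [n|n].
- by exists (n * al)%N, (n * be)%N; rewrite !PoszM -!mulrA -mulrBr e1.
- exists (n.+1 * al')%N, (n.+1 * be')%N.
  by rewrite !PoszM -!mulrA -mulrBr e2 NegzE mulrN mulNr.
Qed.

Hypothesis a_gt0 : (0 < a)%N.

Lemma lincomb_reduce z x (m : int) :
  z%:Z * a%:Z - x%:Z * b%:Z = m * d%:Z -> z%:Z * a'%:Z - x%:Z * b'%:Z = m.
Proof.
have d_neq0 : d%:Z != 0 by rewrite eqz_nat -lt0n gcdn_gt0 a_gt0.
have [-> ->] : a%:Z = a'%:Z * d%:Z /\ b%:Z = b'%:Z * d%:Z.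
  by rewrite -!PoszM !divnK ?dvdn_gcdl ?dvdn_gcdr.
by rewrite !mulrA -mulrBl => /(mulIf d_neq0).
Qed.

Lemma odd_reduced_sum p q : case_ab a b p q -> ~~ (p && q) -> odd (a' + b').
Proof.
move=> [[al [be [e1 _ <-]]] [al' [be' [e2 _ <-]]]] npq.
have d_gt0 : (0 < d)%N by rewrite gcdn_gt0 a_gt0.
rewrite oddD; case oa: (odd a'); case ob: (odd b') => //=.
- rewrite -[d%:Z]mul1r in e1; rewrite -[- d%:Z]mulN1r in e2.
  have e1' := lincomb_reduce e1; have e2' := lincomb_reduce e2.
  have e1n : (al * a' = be * b' + 1)%N by lia.
  have e2n : (be' * b' = al' * a' + 1)%N by lia.
  move: npq; rewrite (odd_add_of_odd_coefs oa ob e1n) addnC.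
  by rewrite (odd_add_of_odd_coefs ob oa e2n).
- have h2a : (2 * d %| a)%N.
    by rewrite -[X in (_ %| X)%N](divnK (dvdn_gcdl a b)) dvdn_pmul2r // dvdn2 oa.
  have h2b : (2 * d %| b)%N.
    by rewrite -[X in (_ %| X)%N](divnK (dvdn_gcdr a b)) dvdn_pmul2r // dvdn2 ob.
  have : (2 * d %| d)%N by rewrite dvdn_gcd h2a h2b.
  by move/(dvdn_leq d_gt0); lia.
Qed.

Lemma even_lincomb : (0 < b)%N -> (case1' a b \/ case2' a b \/ case3' a b) ->
  forall m : int, exists z x : nat,
    [/\ z%:Z * a%:Z - x%:Z * b%:Z = m * d%:Z, ~~ odd (z + x) & (0 < z)%N].
Proof.
move=> b_gt0 cases m.
have [p [q [pq npq]]] : exists p q, case_ab a b p q /\ ~~ (p && q).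
  by case: cases => [|[|]] ?; [exists false, false | exists false, true | exists true, false].
have [z [x zx]] := lincomb_multiple pq m.
have b'_gt0 : (0 < b')%N by rewrite divn_gt0 ?gcdn_gt0 ?a_gt0 // dvdn_leq ?dvdn_gcdr.
pose j := (~~ odd (z + x)).+1.
exists (z + j * b')%N, (x + j * a')%N; split.
- by rewrite lincomb_shift.
- rewrite addnACA -mulnDr [(b' + a')%N]addnC oddD oddM (odd_reduced_sum pq npq) /j /=.
  by case: (odd (z + x)).
- by rewrite addn_gt0 muln_gt0 b'_gt0 orbT.
Qed.

End ReducedCoefficients.

Theorem proposition4p9 (a b : nat) (c : int) (k : natinf) (deg : nat -> int) :
  (0 < a)%N -> (0 < b)%N ->
  - (b%:Z) < c -> c < a%:Z ->
  gcdn (gcdn a b) `|c|%N = 1%N ->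
  gcdn a b <> 1%N -> gcdn a `|c|%N <> 1%N -> gcdn b `|c|%N <> 1%N ->
  natinf_ge k (gcdn a b).-1 ->
  (case1' a b \/ case2' a b \/ case3' a b) ->
  realizes_grading deg [:: - (b%:Z); c; a%:Z] [:: None; k; None] ->
  d_central (gcdn a b) deg.
Proof.
move=> a_gt0 b_gt0 _ _ gcd_abc _ _ _ k_ge cases [_ [_ [_ hcard]]].
have /= degB := has_card_unbounded (hcard 0%N isT).
have /= degC := hcard 1%N isT.
have /= degA := has_card_unbounded (hcard 2%N isT).
have repr := even_lincomb a_gt0 b_gt0 cases.
split=> [r | _ /dvdzP[m ->]].
- have d_gt0 : (0 < gcdn a b)%N by rewrite gcdn_gt0 a_gt0.
  have cop : coprime `|c| (gcdn a b) by rewrite /coprime gcdnC gcd_abc.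
  have [y [m [y_lt ->]]] := coprime_residue_decomp r d_gt0 cop.
  have k_ge_y : natinf_ge k y by move: k_ge; case: (k) => //= n; lia.
  have [t [mt st Ct]] := has_card_monomial degC k_ge_y.
  have [z [x [zx _ _]]] := repr m.
  have [u [mu _ du]] := monomial_extend_ab degA degB x z mt.
  exists (t ++ u); split=> //.
  by rewrite mdeg_cat (mdeg_const Ct) st du zx.
- have [z [x [zx ev z_gt0]]] := repr m.
  have [f [hf f_disj]] := disjoint_monomials_ab degA degB x z_gt0.
  exists f; split=> // n.
  by have [mf -> ->] := hf n; rewrite addnC ev zx.
Qed.
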